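(* Let $r\ge 0$ be an integer and $\delta>0$. Every graph $G$ with $\tilde\nabla_{r/2}(G)\ge\delta$ contains a stable $i$-subdivision of density at least $\delta/(r+1)$ for some $i\in\{0,\dots,r\}$.
   Context: For a graph $H$, a subdivision of $H$ replaces edges of $H$ by internally vertex-disjoint paths; the vertices corresponding to $V(H)$ are called nails, the subgraph of $G$ realizing it is the model. For half-integer $s\ge0$, $H$ is an $s$-shallow topological minor of $G$ if $G$ contains as a subgraph a subdivision of $H$ in which every edge of $H$ is replaced by a path of length at most $2s+1$. Density of a graph is $|E|/|V|$, and $\tilde\nabla_s(G)$ is the maximum density of an $s$-shallow topological minor of $G$. $G$ contains $H$ as a stable $i$-subdivision if $G$ contains $H$ as an $\frac{i}{2}$-shallow topological minor with a model in which every path corresponding to an edge of $H$ has length exactly $i+1$ and is an induced path in $G$; the density of the stable subdivision is the density of $H$. *)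

From HB Require Import structures.
From mathcomp Require Import all_boot all_order all_algebra.
Set Implicit Arguments. Unset Strict Implicit. Unset Printing Implicit Defensive.
Import Order.TTheory GRing.Theory Num.Theory.

Record sgraph := SGraph {
  svert :> finType;
  sadj : rel svert;
  sadj_sym : symmetric sadj;
  sadj_irr : irreflexive sadj }.

Definition sedges (G : sgraph) : {set {set G}} :=
  [set [set p.1; p.2] | p in [set p : G * G | sadj p.1 p.2]].

Definition density (R : numFieldType) (G : sgraph) : R :=
  (#|sedges G|%:R / #|G|%:R)%R.

(* A model of a subdivision of H in G: nails [nail] (injective) and, for
   each edge uv of H, the sequence [P u v] of internal vertices of the
   path from nail u to nail v (with P v u the reverse of P u v). *)
Definition subdiv_model (H G : sgraph) (nail : H -> G) (P : H -> H -> seq G)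
  : Prop :=
  [/\ injective nail,
      forall u v, sadj u v ->
        path (@sadj G) (nail u) (rcons (P u v) (nail v)) /\
        uniq (nail u :: rcons (P u v) (nail v)),
      forall u v, sadj u v -> P v u = rev (P u v),
      forall u v w, sadj u v -> nail w \notin P u v
    & forall u v u' v' x, sadj u v -> sadj u' v' ->
        x \in P u v -> x \in P u' v' ->
        (u = u' /\ v = v') \/ (u = v' /\ v = u')].

(* H is an (r/2)-shallow topological minor of G: every path has length
   (= number of internal vertices + 1) at most 2(r/2)+1 = r+1. *)
Definition shallow_top_minor_half (r : nat) (H G : sgraph) : Prop :=
  exists nail P, @subdiv_model H G nail P /\
    forall u v, sadj u v -> size (P u v) <= r.

(* (x0 is an irrelevant default, indices are in range)
   the sequence q of vertices is an induced path of G: two vertices of q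
   are adjacent in G only if they are consecutive in q *)
Definition induced_seq (G : sgraph) (x0 : G) (q : seq G) : Prop :=
  forall j k, j < size q -> k < size q ->
    sadj (nth x0 q j) (nth x0 q k) ->
    j.+1 = k \/ k.+1 = j.

Definition stable_subdiv (i : nat) (H G : sgraph) : Prop :=
  exists nail P, @subdiv_model H G nail P /\
    forall u v, sadj u v ->
      size (P u v) = i /\
      @induced_seq G (nail u) (nail u :: rcons (P u v) (nail v)).

From HB Require Import structures.
From mathcomp Require Import all_boot all_order all_algebra zify.
Import Order.TTheory GRing.Theory Num.Theory.

(* Each path of an (r/2)-shallow model, from nail u to nail v, can be
   shortcut greedily into an induced path: from the current vertex jump to
   the last later vertex of the path adjacent to it.  The shortcut paths
   still form a model, now with induced paths of at most r inner vertices.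
   Sorting the edges of H by the number i of inner vertices of their path
   splits H into r+1 spanning subgraphs, the i-th of which is a stable
   i-subdivision in G; one of them carries at least a 1/(r+1) fraction of
   the edges of H. *)

Section Shortcut.
Set Implicit Arguments. Unset Strict Implicit.
Variable G : sgraph.
Implicit Types (x z : G) (s t : seq G).

Fixpoint last_nbr_suffix x t : seq G :=
  if t is z :: t' then
    if has (sadj x) t' then last_nbr_suffix x t'
    else if sadj x z then t else [::]
  else [::].

Lemma last_nbr_suffixP x t : has (sadj x) t ->
  exists t1 z t2, [/\ t = t1 ++ z :: t2, last_nbr_suffix x t = z :: t2,
                      sadj x z & ~~ has (sadj x) t2].
Proof.
elim: t => [|w t IH] //=.
case Ht: (has (sadj x) t).
  by move=> _; have [t1 [z [t2 [-> ? ? ?]]]] := IH Ht; exists (w :: t1), z, t2.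
by rewrite orbF => xw; exists [::], w, t; rewrite xw Ht.
Qed.

Fixpoint shortcut n x t : seq G :=
  if n is n'.+1 then
    if last_nbr_suffix x t is z :: t' then z :: shortcut n' z t' else [::]
  else [::].

Fixpoint chordless s : bool :=
  if s is x :: s' then ~~ has (sadj x) (behead s') && chordless s' else true.

Lemma shortcutP n x t : size t <= n -> path (@sadj G) x t ->
  [/\ subseq (shortcut n x t) t, last x (shortcut n x t) = last x t,
      path (@sadj G) x (shortcut n x t) & chordless (x :: shortcut n x t)].
Proof.
elim: n x t => [|n IH] x t; first by case: t.
move=> size_t path_t; have [has_t|] := boolP (has (sadj x) t); last first.
  by case: t path_t {size_t} => //= a t /andP[->].
have [t1 [z [t2 [def_t suffix_t xz no_nbr]]]] := last_nbr_suffixP has_t.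
rewrite [shortcut _ _ _]/= suffix_t; subst t.
have path_z : path (@sadj G) z t2.
  by move: path_t; rewrite cat_path => /andP[_ /andP[]].
have size_t2 : size t2 <= n by move: size_t; rewrite size_cat /=; lia.
have [sub_t2 last_t2 path_t2 chordless_t2] := IH z t2 size_t2 path_z.
split; rewrite /= ?xz //.
- apply: subseq_trans (suffix_subseq t1 (z :: t2)).
  by rewrite /= eqxx.
- by rewrite last_cat /= last_t2.
- rewrite -/(chordless (z :: _)) chordless_t2 andbT.
  apply: contra no_nbr => /hasP[y /(mem_subseq sub_t2) y_t2 xy].
  by apply/hasP; exists y.
Qed.

Lemma chordless_induced (x0 : G) s : chordless s -> induced_seq x0 s.
Proof.
elim: s => [|x s IH] /=; first by move=> _ j k.
move=> /andP[no_chord /IH induced_s] [|j] [|k] /= lt_j lt_k.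
- by rewrite sadj_irr.
- case: k lt_k => [|k] lt_k xy; first by left.
  case: s lt_k xy no_chord {IH induced_s lt_j} => [|a s] //= lt_k xy.
  by case/hasP; exists (nth x0 s k) => //; apply: mem_nth; rewrite -2!ltnS.
- case: j lt_j => [|j] lt_j yx; first by right.
  case: s lt_j yx no_chord {IH induced_s lt_k} => [|a s] //= lt_j yx.
  by case/hasP; exists (nth x0 s j); rewrite 1?sadj_sym //; apply: mem_nth; rewrite -2!ltnS.
- by move=> /(induced_s j k lt_j lt_k); lia.
Qed.

Lemma induced_seq_rev (x0 y0 : G) s :
  induced_seq x0 s -> induced_seq y0 (rev s).
Proof.
move=> induced_s j k; rewrite size_rev => lt_j lt_k.
rewrite !nth_rev // (set_nth_default x0); last lia.
rewrite (set_nth_default x0 y0 (n := size s - k.+1)); last lia.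
by move=> /induced_s; lia.
Qed.

Lemma path_rev_rcons x z s :
  path (@sadj G) x (rcons s z) -> path (@sadj G) z (rcons (rev s) x).
Proof.
have := rev_path (@sadj G) x (rcons s z).
rewrite last_rcons belast_rcons rev_cons => -> .
by rewrite (@eq_path _ _ (@sadj G)) // => a b; rewrite sadj_sym.
Qed.

End Shortcut.

Lemma card_bigcup_leq {T : finType} {n : nat} (A : 'I_n -> {set T}) :
  #|\bigcup_(i < n) A i| <= \sum_(i < n) #|A i|.
Proof.
apply: (big_ind2 (fun (X : {set T}) m => #|X| <= m)) => //; first by rewrite cards0.
by move=> X m Y k le_X le_Y; apply: leq_trans (leq_card_setU X Y).1 (leq_add le_X le_Y).
Qed.

Lemma cover_large_part {T : finType} {n : nat} {A : {set T}} {B : 'I_n.+1 -> {set T}} :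
  A \subset \bigcup_(i < n.+1) B i -> exists i, #|A| <= n.+1 * #|B i|.
Proof.
move=> /subset_leq_card le_A.
have [i max_i] := @bigop.eq_bigmax _ (fun i => #|B i|) (ltac:(by rewrite card_ord)).
have le_max j : #|B j| <= #|B i| by rewrite -max_i; apply: leq_bigmax.
exists i; apply: leq_trans le_A (leq_trans (card_bigcup_leq B) _).
have -> : n.+1 * #|B i| = \sum_(j < n.+1) #|B i| by rewrite sum_nat_const card_ord.
by apply: leq_sum => j _.
Qed.

Section ChordlessModel.
Set Implicit Arguments. Unset Strict Implicit.
Variables (H G : sgraph) (nail : H -> G) (P : H -> H -> seq G).
Hypothesis model : subdiv_model nail P.

(* [Q] may replace the inner vertices [P u v] of the path of the edge uv. *)
Definition induced_refinement u v (Q : seq G) :=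
  [/\ path (@sadj G) (nail u) (rcons Q (nail v)),
      uniq (nail u :: rcons Q (nail v)),
      induced_seq (nail u) (nail u :: rcons Q (nail v)),
      {subset Q <= P u v} & size Q <= size (P u v)].

(* The shortcut path ends at [nail v]; [behead (belast _ _)] drops it. *)
Definition shortcut_inner u v : seq G :=
  let t := rcons (P u v) (nail v) in
  behead (belast (nail u) (shortcut (size t) (nail u) t)).

Lemma shortcut_inner_refinement u v :
  sadj u v -> induced_refinement u v (shortcut_inner u v).
Proof.
case: model => nail_inj model_path _ _ _ uv.
have [path_t uniq_t] := model_path u v uv.
rewrite /induced_refinement /shortcut_inner.
set t := rcons (P u v) (nail v).
have [sub_t last_t path_s chordless_s] := shortcutP (leqnn (size t)) path_t.
set s := shortcut _ _ _ in sub_t last_t path_s chordless_s *.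
have def_s : s = rcons (behead (belast (nail u) s)) (nail v).
  case: s last_t {sub_t path_s chordless_s} => [|y s] /=.
    by rewrite last_rcons => /nail_inj eq_uv; rewrite eq_uv sadj_irr in uv.
  by rewrite last_rcons => <-; rewrite -lastI.
rewrite -def_s.
have uniq_s : uniq (nail u :: s).
  by apply: subseq_uniq uniq_t; rewrite /= eqxx.
split => //.
- exact: chordless_induced.
- move=> x x_inner.
  have : x \in t by apply: (mem_subseq sub_t); rewrite def_s mem_rcons inE x_inner orbT.
  rewrite mem_rcons inE => /predU1P[x_nail|//].
  move: uniq_s; rewrite /= def_s rcons_uniq => /and3P[_ + _].
  by rewrite -x_nail x_inner.
- by move: (size_subseq sub_t); rewrite {1}def_s /t !size_rcons.
Qed.

Lemma induced_refinement_rev u v Q :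
  sadj u v -> induced_refinement v u Q -> induced_refinement u v (rev Q).
Proof.
case: model => _ _ model_rev _ _ uv [path_Q uniq_Q induced_Q sub_Q size_Q].
have rev_ends x y : rev (y :: rcons Q x) = x :: rcons (rev Q) y.
  by rewrite rev_cons rev_rcons.
split.
- exact: path_rev_rcons.
- by rewrite -rev_ends rev_uniq.
- by rewrite -rev_ends; apply: induced_seq_rev induced_Q.
- by move=> x; rewrite mem_rev => /sub_Q; rewrite model_rev ?mem_rev // sadj_sym.
- by rewrite size_rev model_rev ?size_rev // sadj_sym.
Qed.

(* Shortcutting is not symmetric in u and v, so the path of each edge is
   shortcut from its endpoint of smaller rank only. *)
Definition model_inner u v : seq G :=
  if enum_rank u < enum_rank v then shortcut_inner u v
  else rev (shortcut_inner v u).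

Lemma model_inner_refinement u v :
  sadj u v -> induced_refinement u v (model_inner u v).
Proof.
move=> uv; rewrite /model_inner; case: ifP => _; first exact: shortcut_inner_refinement.
by apply: induced_refinement_rev => //; apply: shortcut_inner_refinement; rewrite sadj_sym.
Qed.

Lemma model_inner_rev u v : sadj u v -> model_inner v u = rev (model_inner u v).
Proof.
move=> uv; rewrite /model_inner.
have : enum_rank u != enum_rank v.
  by apply: contraTneq uv => /enum_rank_inj ->; rewrite sadj_irr.
by case: ltngtP; rewrite ?revK // => /val_inj ->; rewrite eqxx.
Qed.

Definition length_class_adj (i : nat) : rel H :=
  fun u v => sadj u v && (size (model_inner u v) == i).

Lemma length_class_adj_sym i : symmetric (length_class_adj i).
Proof.
move=> u v; rewrite /length_class_adj sadj_sym.
by case vu: (sadj v u); rewrite //= model_inner_rev ?size_rev.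
Qed.

Lemma length_class_adj_irr i : irreflexive (length_class_adj i).
Proof. by move=> u; rewrite /length_class_adj sadj_irr. Qed.

Definition length_class i : sgraph :=
  SGraph (length_class_adj_sym i) (length_class_adj_irr i).

Lemma length_class_stable i : stable_subdiv i (length_class i) G.
Proof.
have [nail_inj _ _ nail_notin disjoint_inner] := model.
exists nail, model_inner; split; last first.
  move=> u v /andP[uv /eqP size_uv]; split => //.
  by case: (model_inner_refinement uv).
split => // [u v /andP[uv _]|u v /andP[uv _]|u v w /andP[uv _]|u v u' v' x /andP[uv _] /andP[uv' _]].
- by case: (model_inner_refinement uv).
- exact: model_inner_rev.
- have [_ _ _ sub_uv _] := model_inner_refinement uv.
  by apply: contra (nail_notin u v w uv); apply: sub_uv.
- have [_ _ _ sub_uv _] := model_inner_refinement uv.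
  have [_ _ _ sub_uv' _] := model_inner_refinement uv'.
  by move=> /sub_uv x_uv /sub_uv'; apply: disjoint_inner.
Qed.

Lemma sedges_sub_length_classes r :
  (forall u v, sadj u v -> size (P u v) <= r) ->
  sedges H \subset \bigcup_(i < r.+1) (sedges (length_class i) : {set {set H}}).
Proof.
move=> short; apply/subsetP => e /imsetP[[u v]]; rewrite inE /= => uv ->.
have [_ _ _ _ size_uv] := model_inner_refinement uv.
have lt_size : size (model_inner u v) < r.+1 by apply: leq_trans size_uv (short u v uv).
apply/bigcupP; exists (Ordinal lt_size) => //.
by apply/imsetP; exists (u, v); rewrite // inE /= /length_class_adj uv eqxx.
Qed.

Lemma large_length_class r :
  (forall u v, sadj u v -> size (P u v) <= r) ->
  exists i : 'I_r.+1, #|sedges H| <= r.+1 * #|sedges (length_class i)|.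
Proof.
by move=> /sedges_sub_length_classes /cover_large_part[i le_edges]; exists i.
Qed.

End ChordlessModel.

Lemma density_le_scaled (R : realFieldType) {H H' : sgraph} {k : nat} :
  #|sedges H| <= k.+1 * #|sedges H'| -> #|H'| = #|H| ->
  (density R H / k.+1%:R <= density R H')%R.
Proof.
move=> le_edges same_vertices; rewrite /density same_vertices mulrAC.
apply: ler_wpM2r; first by rewrite invr_ge0 ler0n.
by rewrite ler_pdivrMr ?ltr0n // mulrC -natrM ler_nat.
Qed.

Theorem mainTheorem8 (R : realFieldType) (r : nat) (delta : R)
  (G : sgraph) :
  (0 < delta)%R ->
  (exists H : sgraph, shallow_top_minor_half r H G /\ (delta <= density R H)%R) ->
  exists i : nat, i <= r /\
    exists H : sgraph, stable_subdiv i H G /\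
      (delta / (r.+1)%:R <= density R H)%R.
Proof.
move=> _ [H [[nail [P [model short]]] dense_H]].
have [i le_edges] := large_length_class model short.
exists i; split; first by rewrite -ltnS.
exists (length_class nail P i); split; first exact: length_class_stable.
have dense_class := density_le_scaled R le_edges erefl.
apply: le_trans dense_class.
by apply: ler_wpM2r dense_H; rewrite invr_ge0 ler0n.
Qed.
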